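(* A tree $T$ is skew-nontrivial (i.e., $\check T=T$) if and only if the distance between each pair of leaves of $T$ is even.
   Context: Skew forcing: vertices are colored blue or white; if any vertex $u$ (blue or white) has exactly one white neighbor $v$, then $u$ may force $v$ to become blue. The skew-nontrivial subgraph $\check G$ of a graph $G$ is obtained as follows: starting with no blue vertices, apply the skew forcing rule until no more forces are possible; then delete every blue vertex all of whose neighbors are blue, and delete every edge both of whose endpoints are blue. $G$ is skew-nontrivial if $\check G=G$. *)

From mathcomp Require Import all_boot.
Set Implicit Arguments. Unset Strict Implicit. Unset Printing Implicit Defensive.

Section Graphs.
Variable T : finType.
Implicit Type e : rel T.

Definition simple_graph e := irreflexive e /\ symmetric e.

Definition connected_graph e := forall x y : T, connect e x y.

Definition acyclic_graph e :=
  forall p : seq T, uniq p -> 3 <= size p -> ~~ cycle e p.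

Definition is_tree e := [/\ simple_graph e, connected_graph e & acyclic_graph e].

Definition leaf e (v : T) := #|[set w | e v w]| == 1.

Definition walk e (x y : T) (n : nat) :=
  exists p : seq T, [/\ size p = n, path e x p & last x p = y].

Definition graph_dist e (x y : T) (d : nat) :=
  walk e x y d /\ (forall m, walk e x y m -> d <= m).

(* One round of skew forcing, applied to every possible force at once:
   v becomes blue if some vertex u (of any colour) has v as its unique
   white neighbour. *)
Definition skew_step e (B : {set T}) : {set T} :=
  B :|: [set v | [exists u, e u v && [forall w, e u w ==> (w == v) || (w \in B)]]].

(* Final blue set: starting with no blue vertex, apply forces until no more are
   possible (#|T| rounds always suffice, since each non-final round adds a vertex). *)
Definition skew_closure e : {set T} := iter #|T| (skew_step e) set0.

Definition skew_check_vertices e : {set T} :=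
  let B := skew_closure e in
  [set v | ~~ ((v \in B) && [forall w, e v w ==> (w \in B)])].

Definition skew_check_edges e : rel T :=
  let B := skew_closure e in
  fun u v => e u v && ~~ ((u \in B) && (v \in B)).

Definition skew_nontrivial e :=
  skew_check_vertices e = [set: T] /\ skew_check_edges e =2 e.

End Graphs.

From mathcomp Require Import all_boot zify.

Set Implicit Arguments. Unset Strict Implicit. Unset Printing Implicit Defensive.

(* In a forest every edge has a blue endpoint of the final skew colouring: a
   white vertex z with a white neighbour y would otherwise force y, so z has a
   second white neighbour, and a simple white path could be prolonged forever.
   If moreover no edge has two blue endpoints, the colours alternate along
   walks; leaves are white, since they force their unique neighbour, so walks
   between leaves have even length.
   Conversely, suppose walks between leaves are even (in a forest all walks
   between two vertices have the same parity).  Every blue vertex is then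
   reached from some leaf by an odd walk: a vertex forced by a leaf is adjacent
   to it, and a vertex forced by u through a blue neighbour w of u lies two
   steps beyond w.  So two adjacent blue vertices would yield an odd walk
   between leaves, and the neighbour from which an odd walk enters a blue
   vertex is white. *)

Section Walks.
Variables (T : finType) (e : rel T).

Lemma walk0 x : walk e x x 0.
Proof. by exists [::]. Qed.

Lemma walk_cat x y z m n : walk e x y m -> walk e y z n -> walk e x z (m + n).
Proof.
move=> [p [<- Pp Lp]] [q [<- Pq Lq]]; exists (p ++ q).
by rewrite size_cat cat_path last_cat Lp Pp Pq.
Qed.

Lemma walk_rcons x y z n : walk e x y n -> e y z -> walk e x z n.+1.
Proof. by move=> W eyz; rewrite -addn1; apply: walk_cat W _; exists [:: z]; rewrite /= eyz. Qed.

Lemma walk_last x y n : walk e x y n.+1 -> exists2 w, walk e x w n & e w y.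
Proof.
case=> p []; case/lastP: p => [//|p z]; rewrite size_rcons rcons_path last_rcons.
by case=> Sp /andP[Pp ez] <-; exists (last x p) => //; exists p.
Qed.

Lemma walkP x y n :
  reflect (walk e x y n) [exists p : n.-tuple T, path e x p && (last x p == y)].
Proof.
apply: (iffP existsP) => [[p /andP[Pp /eqP Lp]] | [p [Sp Pp Lp]]].
  by exists p; rewrite size_tuple.
have Sp' : size p == n by rewrite Sp.
by exists (Tuple Sp'); rewrite /= Pp Lp eqxx.
Qed.

Lemma graph_dist_exists x y n : walk e x y n -> exists d, graph_dist e x y d.
Proof.
move=> W; pose has_walk k := [exists p : k.-tuple T, path e x p && (last x p == y)].
have [|d /walkP Wd dmin] := @ex_minnP has_walk; first by exists n; apply/walkP.
by exists d; split=> // m /walkP /dmin.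
Qed.

Lemma walk_alternating (c : pred T) x y n :
  (forall u v, e u v -> c v = ~~ c u) -> walk e x y n -> c y = c x (+) odd n.
Proof.
move=> alt [p [<- Pp <-]]; elim: p x Pp => [|z p IHp] x /=; first by rewrite addbF.
by case/andP=> exz /IHp ->; rewrite (alt x z exz) addNb addbN.
Qed.

Hypothesis sym : symmetric e.

Lemma walk_rev x y n : walk e x y n -> walk e y x n.
Proof.
move=> [p [<- Pp <-]]; elim: p x Pp => [|z p IHp] x /=; first by exists [::].
case/andP=> exz /IHp[q [Sq Pq Lq]]; exists (rcons q x).
by rewrite size_rcons rcons_path Pq Lq last_rcons Sq sym exz.
Qed.

End Walks.

Lemma not_uniq_split (T : eqType) (s : seq T) :
  ~~ uniq s -> exists s1 z s2 s3, s = s1 ++ z :: s2 ++ z :: s3.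
Proof.
elim: s => [|a s IHs] //=; rewrite negb_and negbK.
case: (boolP (a \in s)) => [/splitPr[s2 s3] _ | _ /= /IHs[s1 [z [s2 [s3 ->]]]]].
  by exists [::], a, s2, s3.
by exists (a :: s1), z, s2, s3.
Qed.

Lemma cycle_shared_vertex (T : eqType) (e : rel T) z s t :
  cycle e (z :: s ++ z :: t) = cycle e (z :: s) && cycle e (z :: t).
Proof. by rewrite /= rcons_cat cat_path /= !rcons_path andbA. Qed.

Section Acyclic.
Variables (T : finType) (e : rel T).
Hypotheses (irr : irreflexive e) (acyc : acyclic_graph e).

Lemma cycle_even c : cycle e c -> ~~ odd (size c).
Proof.
(* A closed walk through a repeated vertex splits there into two shorter ones. *)
have [n] := ubnP (size c); elim: n c => // n IHn c /ltnSE-le_c_n Cc.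
have [Uc | /not_uniq_split[s1 [z [s2 [s3 Ec]]]]] := boolP (uniq c).
  case: (leqP 3 (size c)) => [c3|]; first by rewrite (negbTE (acyc Uc c3)) in Cc.
  by case: c Cc {Uc le_c_n} => [|a [|b [|]]] //=; rewrite irr.
move: Cc le_c_n; rewrite -(rot_cycle (size s1)) Ec rot_size_cat !cat_cons -catA cat_cons.
rewrite cycle_shared_vertex => /andP[C2 C3].
have -> : size (s1 ++ z :: s2 ++ z :: s3) = size (z :: s2) + size (z :: s3 ++ s1).
  by rewrite /= !size_cat /= size_cat /=; lia.
move=> le_c_n; rewrite oddD (negbTE (IHn _ _ C2)) ?(negbTE (IHn _ _ C3)) //.
all: by move: le_c_n => /=; lia.
Qed.

Lemma closed_walk_even x n : walk e x x n -> ~~ odd n.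
Proof.
case=> p [<-]; case/lastP: p => [//|q z]; rewrite size_rcons last_rcons => Pq Ez.
by subst z; apply: (@cycle_even (x :: q)).
Qed.

Hypothesis sym : symmetric e.

Lemma walk_parity x y m n : walk e x y m -> walk e x y n -> odd m = odd n.
Proof.
move=> Wm Wn; have := closed_walk_even (walk_cat Wm (walk_rev sym Wn)).
by rewrite oddD; case: (odd m) (odd n) => [] [].
Qed.

Lemma acyclic_no_chord z y r w :
  uniq (z :: y :: r) -> path e z (y :: r) -> e z w -> w \notin r.
Proof.
move=> U P ezw; apply/negP=> wr; move: U P; case/splitPr: wr => r1 r2.
rewrite -cat_rcons -!cat_cons cat_uniq cat_path => /andP[U _] /andP[P _].
have C : cycle e (z :: y :: rcons r1 w).
  by rewrite /cycle rcons_path P /= last_rcons sym.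
by move: C; apply/negP/acyc; rewrite //= size_rcons.
Qed.

End Acyclic.

Section SkewClosure.
Variables (T : finType) (e : rel T).
Local Notation B := (skew_closure e).

Lemma skew_step_mono : {homo skew_step e : X Y / X \subset Y}.
Proof.
move=> X Y /subsetP XY; apply/subsetP=> v; rewrite !inE.
case/orP=> [/XY -> // | /existsP[u /andP[euv /forallP forced]]].
apply/orP; right; apply/existsP; exists u; rewrite euv; apply/forallP=> w.
by apply/implyP=> /(implyP (forced w)) /orP[-> // | /XY ->]; rewrite orbT.
Qed.

Lemma skew_closure_fixed : skew_step e B = B.
Proof. exact: (fixsetK skew_step_mono). Qed.

Lemma skew_force u v : e u v -> (forall w, e u w -> w != v -> w \in B) -> v \in B.
Proof.
move=> euv forced; rewrite -skew_closure_fixed !inE; apply/orP; right.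
apply/existsP; exists u; rewrite euv; apply/forallP=> w; apply/implyP=> euw.
by case: eqP => //= /eqP; apply: forced.
Qed.

Lemma skew_closure_ind (P : T -> Prop) :
  (forall X : {set T}, {in X, forall v, P v} -> {in skew_step e X, forall v, P v}) ->
  {in B, forall v, P v}.
Proof.
move=> Pstep; rewrite /skew_closure; elim: #|T| => [|k IHk] /=; last exact: Pstep.
by move=> v; rewrite inE.
Qed.

Lemma leafP x : reflect (exists y, forall w, e x w = (w == y)) (leaf e x).
Proof.
apply: (iffP cards1P) => [[y Ny] | [y Ny]]; exists y.
  by move=> w; rewrite -in_set1 -Ny inE.
by apply/setP=> w; rewrite !inE Ny.
Qed.

Lemma leaf_neighbor_in_skew_closure x y : leaf e x -> e x y -> y \in B.
Proof.
case/leafP=> z Nz exy; apply: (skew_force exy) => w.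
by move: exy; rewrite !Nz => /eqP-> /eqP->; rewrite eqxx.
Qed.

End SkewClosure.

Section WhiteEdges.
Variables (T : finType) (e : rel T).
Hypotheses (irr : irreflexive e) (sym : symmetric e) (acyc : acyclic_graph e).
Local Notation B := (skew_closure e).

Definition white_path x p :=
  [&& uniq (x :: p), path e x p & all (fun v => v \notin B) (x :: p)].

Lemma white_path_extend z y r :
  white_path z (y :: r) -> exists w, white_path w (z :: y :: r).
Proof.
case/and3P=> U P W; have ezy : e z y by case/andP: P.
have [|stuck] := boolP [exists w, [&& e z w, w != y & w \notin B]].
  case/existsP=> w /and3P[ezw wy wW]; exists w.
  have wz : w != z by apply: contraTneq ezw => ->; rewrite irr.
  have wr := acyclic_no_chord acyc sym U P ezw.
  have wn : w \notin z :: y :: r by rewrite !inE !negb_or wz wy wr.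
  by rewrite /white_path /= wn sym ezw wW; move: U P W => /= -> -> ->.
have : y \in B.
  apply: (skew_force ezy) => w ezw wy; apply: contraNT stuck => wW.
  by apply/existsP; exists w; rewrite ezw wy.
by case/and3P: W => _ /negP.
Qed.

Lemma skew_closure_cover u v : e u v -> (u \in B) || (v \in B).
Proof.
move=> euv; apply/negPn/negP; rewrite negb_or => /andP[uW vW].
have long n : exists z y r, white_path z (y :: r) /\ n <= size r.
  elim: n => [|n [z [y [r [Wr le_n_r]]]]].
    have uv : u != v by apply: contraTneq euv => ->; rewrite irr.
    by exists u, v, [::]; rewrite /white_path /= inE uv euv uW vW.
  by have [w Ww] := white_path_extend Wr; exists w, z, (y :: r).
have [z [y [r [/and3P[U _ _] le_T_r]]]] := long #|T|.
have := max_card (mem (z :: y :: r)); rewrite (card_uniqP U) /=.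
by rewrite ltnNge (leq_trans le_T_r).
Qed.

Lemma leaf_walks_even_of_skew_edges :
  skew_check_edges e =2 e ->
  forall x y n, leaf e x -> leaf e y -> walk e x y n -> ~~ odd n.
Proof.
move=> same_edges x y n lx ly Wn.
pose blue := [pred v | v \in skew_closure e].
have alt u v : e u v -> blue v = ~~ blue u.
  move=> euv; have := same_edges u v; rewrite /skew_check_edges euv /=.
  by have := skew_closure_cover euv; case: (u \in _); case: (v \in _).
have leaf_white z : leaf e z -> ~~ blue z.
  move=> lz; have [w Nw] := leafP _ _ lz; have ezw : e z w by rewrite Nw.
  by rewrite -(alt _ _ ezw) /= (leaf_neighbor_in_skew_closure lz ezw).
have := walk_alternating alt Wn.
by rewrite (negbTE (leaf_white x lx)) (negbTE (leaf_white y ly)) /= => <-.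
Qed.

End WhiteEdges.

Section LeafParity.
Variables (T : finType) (e : rel T).
Hypothesis sym : symmetric e.
Hypothesis leaf_walks_even :
  forall x y n, leaf e x -> leaf e y -> walk e x y n -> ~~ odd n.

Definition odd_from_leaf v := exists x n, [/\ leaf e x, walk e x v n & odd n].

Lemma odd_from_leaf_edge u v : e u v -> odd_from_leaf u -> odd_from_leaf v -> False.
Proof.
move=> euv [x [m [lx Wm om]]] [y [n [ly Wn on]]].
have := leaf_walks_even lx ly (walk_cat (walk_rcons Wm euv) (walk_rev sym Wn)).
by rewrite oddD /= om on.
Qed.

Lemma odd_from_leaf_step (X : {set T}) :
  {in X, forall v, odd_from_leaf v} -> {in skew_step e X, forall v, odd_from_leaf v}.
Proof.
move=> oddX v; rewrite !inE => /orP[/oddX // | /existsP[u /andP[euv /forallP forced]]].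
have [/existsP[w /andP[euw wv]] | lone] := boolP [exists w, e u w && (w != v)].
  have wX : w \in X by move: (implyP (forced w) euw); rewrite (negbTE wv).
  have [x [m [lx Wm om]]] := oddX w wX.
  exists x, m.+2; split=> //; last by rewrite /= negbK.
  by apply: walk_rcons euv; apply: walk_rcons Wm _; rewrite sym.
have lu : leaf e u.
  apply/leafP; exists v => w; apply/idP/eqP => [euw | ->//].
  by apply: contraNeq lone => wv; apply/existsP; exists w; rewrite euw.
by exists u, 1; split=> //; apply: walk_rcons (walk0 e u) euv.
Qed.

Lemma skew_closure_odd_from_leaf : {in skew_closure e, forall v, odd_from_leaf v}.
Proof. exact: skew_closure_ind odd_from_leaf_step. Qed.

Lemma skew_nontrivial_of_leaf_walks_even : skew_nontrivial e.
Proof.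
have blue := skew_closure_odd_from_leaf.
split=> [|u v].
  apply/setP=> v; rewrite !inE; apply/negP=> /andP[vB /forallP nbrsB].
  have [x [[|n] [_ Wn on]]] := blue v vB; first by [].
  have [w _ ewv] := walk_last Wn.
  apply: (odd_from_leaf_edge ewv) (blue v vB); apply: blue.
  by apply: (implyP (nbrsB w)); rewrite sym.
rewrite /skew_check_edges; case euv: (e u v) => //=.
by apply/negP=> /andP[uB vB]; apply: odd_from_leaf_edge euv (blue u uB) (blue v vB).
Qed.

End LeafParity.

Theorem proposition5p25 (T : finType) (e : rel T) :
  is_tree e ->
  (skew_nontrivial e <->
   forall x y : T, leaf e x -> leaf e y ->
     forall d : nat, graph_dist e x y d -> ~~ odd d).
Proof.
move=> [[irr sym] _ acyc]; split=> [[_ same_edges] | dist_even].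
  move=> x y lx ly d [Wd _].
  exact: leaf_walks_even_of_skew_edges irr sym acyc same_edges x y d lx ly Wd.
apply: skew_nontrivial_of_leaf_walks_even => // x y n lx ly Wn.
have [d [Wd dmin]] := graph_dist_exists Wn.
by rewrite (walk_parity irr acyc sym Wn Wd); apply: dist_even lx ly d (conj Wd dmin).
Qed.
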